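(* Let $(m_j)_{j=1}^{\infty}$ be a strictly increasing sequence of positive integers with $m_{j+1}\ge q\,m_j$ for all $j$, where $q\ge 3$. Let $A_j>0$, $B_j\in\mathbb{C}$ with $A_j^2-|B_j|^2=1$, and let $M,N\in\mathbb{N}$ with $M<N$. Define the trigonometric polynomial $b_{M,N}$ as the upper-right entry of $$\prod_{j=M+1}^{N}\begin{bmatrix} A_j & B_j e^{2\pi i m_j t}\\ \overline{B_j}e^{-2\pi i m_j t} & A_j\end{bmatrix}$$ (factors in increasing order of $j$ from left to right), and write $b_{M,N}(t)=\sum_{n\in F}D_n e^{2\pi i n t}$, where $F\subseteq\mathbb{Z}$ is the set of frequencies at which the Fourier coefficient $D_n$ of $b_{M,N}$ is nonzero. Then $$\sum_{n\in\mathbb{Z}}\Big|\sum_{\substack{n_1,n_2\in F\\ n_2-n_1=n}}D_{n_1}\overline{D_{n_2}}\Big|^2\le e^{8\sum_{j=M+1}^{N}|B_j|^2}.$$ *)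

From Stdlib Require Import Reals ZArith List.
From Coquelicot Require Import Coquelicot.
Import ListNotations.
Open Scope R_scope.

Definition cexpi (x : R) : C := (cos x, sin x).

Record mat2 := Mat2 { m11 : C; m12 : C; m21 : C; m22 : C }.

Definition mat2_id : mat2 := Mat2 (RtoC 1) (RtoC 0) (RtoC 0) (RtoC 1).

Definition mat2_mul (X Y : mat2) : mat2 :=
  Mat2 (Cplus (Cmult (m11 X) (m11 Y)) (Cmult (m12 X) (m21 Y)))
       (Cplus (Cmult (m11 X) (m12 Y)) (Cmult (m12 X) (m22 Y)))
       (Cplus (Cmult (m21 X) (m11 Y)) (Cmult (m22 X) (m21 Y)))
       (Cplus (Cmult (m21 X) (m12 Y)) (Cmult (m22 X) (m22 Y))).

Definition factor (m : nat -> nat) (A : nat -> R) (B : nat -> C) (j : nat) (t : R)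
  : mat2 :=
  Mat2 (RtoC (A j))
       (Cmult (B j) (cexpi (2 * PI * INR (m j) * t)))
       (Cmult (Cconj (B j)) (cexpi (- (2 * PI * INR (m j) * t))))
       (RtoC (A j)).

(* prod_from M k t = factor (M+1) * factor (M+2) * ... * factor (M+k)
   (increasing j from left to right) *)
Fixpoint prod_from (m : nat -> nat) (A : nat -> R) (B : nat -> C) (M k : nat) (t : R)
  : mat2 :=
  match k with
  | O => mat2_id
  | S k' => mat2_mul (prod_from m A B M k' t) (factor m A B (M + k' + 1) t)
  end.

Definition b_MN (m : nat -> nat) (A : nat -> R) (B : nat -> C) (M N : nat) (t : R) : C :=
  m12 (prod_from m A B M (N - M) t).

Definition Csum {T} (L : list T) (f : T -> C) : C :=
  fold_right (fun x acc => Cplus (f x) acc) (RtoC 0) L.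
Definition Rsum {T} (L : list T) (f : T -> R) : R :=
  fold_right (fun x acc => f x + acc) 0 L.

Definition autocorr (F : list Z) (D : Z -> C) (n : Z) : C :=
  Csum F (fun n1 => Csum F (fun n2 =>
    if Z.eqb (n2 - n1)%Z n then Cmult (D n1) (Cconj (D n2)) else RtoC 0)).

Definition sumB2 (B : nat -> C) (M N : nat) : R :=
  Rsum (seq (S M) (N - M)) (fun j => Cmod (B j) ^ 2).

From Stdlib Require Import Reals ZArith List Lra Lia.
From Coquelicot Require Import Coquelicot.
Open Scope R_scope.

(* Write the first row of the product of the first k factors as (a_k, b_k), two trigonometric
   polynomials; the second row is (conj b_k, conj a_k) and |a_k|^2 = 1 + |b_k|^2.  The frequencies
   of a_k lie in [-K, 0] and those of b_k in [1, K], where K = m_{M+k}, so lacunarity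
   (m_{j+1} >= 3 m_j) pushes every cross term of |b_{k+1}|^2 and |b_{k+1}|^4 to nonzero frequencies.
   Integrating over a period, with beta = |B_{M+k+1}|^2, the moments u_k = int |b_k|^2 and
   v_k = int |b_k|^4 therefore satisfy
     u_{k+1} = beta + (1 + 2 beta) u_k,
     v_{k+1} = beta^2 + (4 beta + 6 beta^2) u_k + (1 + 6 beta + 6 beta^2) v_k,
   so v_k + u_k + 1/6 is multiplied by 1 + 6 beta + 6 beta^2 <= e^{8 beta} at each step.  The
   left-hand side of the theorem is a sum of squared Fourier coefficients of |b_{M,N}|^2, which
   Bessel's inequality bounds by int |b_{M,N}|^4 = v_{N-M}. *)

Lemma Cconj_RtoC (r : R) : Cconj (RtoC r) = RtoC r.
Proof. apply injective_projections; simpl; ring. Qed.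

Lemma Csum_app {T} (l1 l2 : list T) f :
  Csum (l1 ++ l2) f = (Csum l1 f + Csum l2 f)%C.
Proof. induction l1; simpl; [ring | rewrite IHl1; ring]. Qed.

Lemma Csum_map {T U} (l : list T) (g : T -> U) f :
  Csum (map g l) f = Csum l (fun x => f (g x)).
Proof. induction l; simpl; congruence. Qed.

Lemma Csum_flat_map {T U} (l : list T) (g : T -> list U) f :
  Csum (flat_map g l) f = Csum l (fun x => Csum (g x) f).
Proof. induction l; simpl; [easy | rewrite Csum_app; congruence]. Qed.

Lemma Csum_ext {T} (l : list T) f g :
  (forall x, In x l -> f x = g x) -> Csum l f = Csum l g.
Proof. induction l; simpl; intros H; [easy | rewrite H, IHl; auto]. Qed.

Lemma Csum_plus {T} (l : list T) f g :
  Csum l (fun x => f x + g x)%C = (Csum l f + Csum l g)%C.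
Proof. induction l; simpl; [ring | rewrite IHl; ring]. Qed.

Lemma Csum_mult_l {T} (l : list T) c f :
  Csum l (fun x => c * f x)%C = (c * Csum l f)%C.
Proof. induction l; simpl; [ring | rewrite IHl; ring]. Qed.

Lemma Csum_0 {T} (l : list T) : Csum l (fun _ => RtoC 0) = 0.
Proof. induction l; simpl; [easy | rewrite IHl; ring]. Qed.

Lemma Csum_swap {T U} (l1 : list T) (l2 : list U) f :
  Csum l1 (fun x => Csum l2 (f x)) = Csum l2 (fun y => Csum l1 (fun x => f x y)).
Proof.
  induction l1; simpl; [now rewrite Csum_0 | now rewrite IHl1, <- Csum_plus].
Qed.

Lemma Csum_conj {T} (l : list T) f :
  Cconj (Csum l f) = Csum l (fun x => Cconj (f x)).
Proof.
  induction l; simpl; [apply Cconj_RtoC | now rewrite Cplus_conj, IHl].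
Qed.

Lemma Re_Csum {T} (l : list T) f : Re (Csum l f) = Rsum l (fun x => Re (f x)).
Proof. induction l; simpl; [easy | now rewrite <- IHl]. Qed.

Lemma Csum_delta_NoDup (L : list Z) (n : Z) (f : Z -> C) :
  NoDup L -> In n L -> Csum L (fun k => if Z.eqb k n then f k else 0) = f n.
Proof.
  induction 1 as [|a L HaL _ IH]; simpl; intros Hin; [easy|].
  destruct Hin as [<- | Hin].
  - rewrite Z.eqb_refl, (Csum_ext _ _ (fun _ => RtoC 0)), Csum_0; [ring|].
    intros x Hx; destruct (Z.eqb_spec x a); congruence.
  - rewrite IH by easy. destruct (Z.eqb_spec a n); [congruence | ring].
Qed.

Lemma Rsum_ext {T} (l : list T) f g : (forall x, f x = g x) -> Rsum l f = Rsum l g.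
Proof. intros H. induction l; simpl; [easy | now rewrite H, IHl]. Qed.

Lemma Rsum_app {T} (l1 l2 : list T) f : Rsum (l1 ++ l2) f = Rsum l1 f + Rsum l2 f.
Proof. induction l1; simpl; [ring | rewrite IHl1; ring]. Qed.

Lemma cexpi_opp x : cexpi (- x) = Cconj (cexpi x).
Proof. unfold cexpi, Cconj. now rewrite cos_neg, sin_neg. Qed.

Definition efreq (k : Z) (t : R) : C := cexpi (2 * PI * IZR k * t).

Lemma efreq_add k l t : efreq (k + l) t = (efreq k t * efreq l t)%C.
Proof.
  unfold efreq, cexpi. rewrite plus_IZR, Rmult_plus_distr_l, Rmult_plus_distr_r.
  rewrite cos_plus, sin_plus. apply injective_projections; simpl; ring.
Qed.

Lemma efreq_opp k t : efreq (- k) t = Cconj (efreq k t).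
Proof. unfold efreq. rewrite opp_IZR, <- cexpi_opp. f_equal. ring. Qed.

Lemma efreq_0 t : efreq 0 t = 1.
Proof.
  unfold efreq, cexpi. rewrite Rmult_0_r, Rmult_0_l, cos_0, sin_0. easy.
Qed.

Lemma efreq_mult_conj k t : (efreq k t * Cconj (efreq k t))%C = 1.
Proof. now rewrite <- efreq_opp, <- efreq_add, Z.add_opp_diag_r, efreq_0. Qed.

Lemma efreq_1 k : efreq k 1 = 1.
Proof.
  unfold efreq, cexpi. rewrite Rmult_1_r.
  assert (Hsin : sin (IZR k * PI) = 0) by (apply sin_eq_0_1; now exists k).
  replace (2 * PI * IZR k) with (2 * (IZR k * PI)) by ring.
  rewrite sin_2a, cos_2a_sin, Hsin. apply injective_projections; simpl; ring.
Qed.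

(* [sum c e^{2 pi i k t}] over the pairs (k, c) of the list; frequencies may repeat. *)
Definition tpoly := list (Z * C).

Fixpoint tp_eval (p : tpoly) (t : R) : C :=
  match p with
  | nil => 0
  | (k, c) :: p' => (c * efreq k t + tp_eval p' t)%C
  end.

Definition tp_coef (p : tpoly) (k : Z) : C :=
  Csum p (fun x => if Z.eqb (fst x) k then snd x else 0).

Definition tp_scale (c : C) (p : tpoly) : tpoly := map (fun x => (fst x, c * snd x)%C) p.
Definition tp_shift (m : Z) (p : tpoly) : tpoly := map (fun x => (fst x + m, snd x)%Z) p.
Definition tp_conj (p : tpoly) : tpoly := map (fun x => ((- fst x)%Z, Cconj (snd x))) p.
Definition tp_mul (p q : tpoly) : tpoly :=
  flat_map (fun x => map (fun y => ((fst x + fst y)%Z, (snd x * snd y)%C)) q) p.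

Lemma tp_eval_app p q t : tp_eval (p ++ q) t = (tp_eval p t + tp_eval q t)%C.
Proof. induction p as [|[k c] p IH]; simpl; [ring | rewrite IH; ring]. Qed.

Lemma tp_eval_scale c p t : tp_eval (tp_scale c p) t = (c * tp_eval p t)%C.
Proof. induction p as [|[k d] p IH]; simpl; [ring | rewrite IH; ring]. Qed.

Lemma tp_eval_shift m p t : tp_eval (tp_shift m p) t = (efreq m t * tp_eval p t)%C.
Proof. induction p as [|[k d] p IH]; simpl; [ring | rewrite IH, efreq_add; ring]. Qed.

Lemma tp_eval_conj p t : tp_eval (tp_conj p) t = Cconj (tp_eval p t).
Proof.
  induction p as [|[k d] p IH]; simpl; [now rewrite Cconj_RtoC|].
  now rewrite IH, efreq_opp, Cplus_conj, Cmult_conj.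
Qed.

Lemma tp_eval_mul p q t : tp_eval (tp_mul p q) t = (tp_eval p t * tp_eval q t)%C.
Proof.
  induction p as [|[k c] p IH]; simpl; [ring|].
  rewrite tp_eval_app, IH.
  replace (tp_eval (map _ q) t) with (c * efreq k t * tp_eval q t)%C; [ring|].
  clear IH. induction q as [|[l d] q IHq]; simpl; [ring | rewrite <- IHq, efreq_add; ring].
Qed.

Lemma tp_coef_app p q k : tp_coef (p ++ q) k = (tp_coef p k + tp_coef q k)%C.
Proof. apply Csum_app. Qed.

Lemma tp_coef_scale c p k : tp_coef (tp_scale c p) k = (c * tp_coef p k)%C.
Proof.
  unfold tp_coef, tp_scale. rewrite Csum_map, <- Csum_mult_l.
  apply Csum_ext; intros x _; simpl. destruct (Z.eqb _ _); ring.
Qed.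

Lemma tp_coef_mul p q k :
  tp_coef (tp_mul p q) k =
  Csum p (fun x => Csum q (fun y => if Z.eqb (fst x + fst y) k then snd x * snd y else 0))%C.
Proof.
  unfold tp_coef, tp_mul. rewrite Csum_flat_map.
  apply Csum_ext; intros x _. now rewrite Csum_map.
Qed.

Definition tp_const (c : C) : tpoly := (0%Z, c) :: nil.

Lemma tp_eval_const c t : tp_eval (tp_const c) t = c.
Proof. simpl. rewrite efreq_0. ring. Qed.

Lemma tp_coef0_const c : tp_coef (tp_const c) 0 = c.
Proof. unfold tp_coef; simpl. ring. Qed.

Lemma is_RInt_Re_efreq k c :
  is_RInt (fun t => Re (c * efreq k t)) 0 1 (Re (if Z.eqb k 0 then c else 0)).
Proof.
  destruct (Z.eqb_spec k 0) as [-> | Hk].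
  - replace (Re c) with (scal (1 - 0) (Re c))
      by (rewrite Rminus_0_r; apply (scal_one (V := R_NormedModule))).
    apply (is_RInt_ext (fun _ => Re c)); [| exact (is_RInt_const 0 1 (Re c))].
    intros t _. now rewrite efreq_0, Cmult_1_r.
  - set (w := 2 * PI * IZR k).
    assert (Hw : w <> 0).
    { apply Rmult_integral_contrapositive_currified; [apply Rgt_not_eq, Rgt_2PI_0 | ].
      now apply not_0_IZR. }
    set (F t := (Re c * sin (w * t) + Im c * cos (w * t)) / w).
    set (f t := Re c * cos (w * t) - Im c * sin (w * t)).
    replace (Re 0) with (minus (F 1) (F 0)).
    + apply (is_RInt_ext f).
      { intros t _. unfold efreq, cexpi. fold w. now unfold f, Cmult, Re, Im. }
      apply (is_RInt_derive F f).
      * intros t _. unfold F, f. auto_derive; [easy | field; easy].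
      * intros t _. apply (ex_derive_continuous (K := R_AbsRing) (V := R_NormedModule)).
        unfold f. auto_derive. easy.
    + pose proof (efreq_1 k) as H1. unfold efreq, cexpi in H1. fold w in H1.
      rewrite Rmult_1_r in H1. injection H1 as Hcos Hsin.
      unfold F, minus, plus, opp; simpl.
      rewrite !Rmult_1_r, Rmult_0_r, sin_0, cos_0, Hcos, Hsin. field; easy.
Qed.

Lemma is_RInt_tp_eval p : is_RInt (fun t => Re (tp_eval p t)) 0 1 (Re (tp_coef p 0)).
Proof.
  induction p as [|[k c] p IH]; simpl.
  - pose proof (is_RInt_const 0 1 0) as H.
    now rewrite (scal_zero_r (V := R_NormedModule)) in H.
  - exact (is_RInt_plus (V := R_NormedModule) _ _ _ _ _ _ (is_RInt_Re_efreq k c) IH).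
Qed.

Lemma Re_tp_coef0_ext p q :
  (forall t, tp_eval p t = tp_eval q t) -> Re (tp_coef p 0) = Re (tp_coef q 0).
Proof.
  intros H.
  rewrite <- (is_RInt_unique _ _ _ _ (is_RInt_tp_eval p)),
          <- (is_RInt_unique _ _ _ _ (is_RInt_tp_eval q)).
  apply RInt_ext. intros t _. now rewrite H.
Qed.

Lemma Re_tp_coef0_ge0 p : (forall t, 0 <= Re (tp_eval p t)) -> 0 <= Re (tp_coef p 0).
Proof.
  intros H. rewrite <- (is_RInt_unique _ _ _ _ (is_RInt_tp_eval p)).
  apply RInt_ge_0; [lra | eexists; apply is_RInt_tp_eval | intros; apply H].
Qed.

Definition freqs_in (P : Z -> Prop) (p : tpoly) : Prop := List.Forall (fun x => P (fst x)) p.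

Lemma freqs_in_impl (P Q : Z -> Prop) p :
  freqs_in P p -> (forall k, P k -> Q k) -> freqs_in Q p.
Proof. intros Hp HPQ. exact (List.Forall_impl _ (fun x => HPQ (fst x)) Hp). Qed.

Lemma freqs_in_app P p q : freqs_in P p -> freqs_in P q -> freqs_in P (p ++ q).
Proof. intros Hp Hq. now apply Forall_app. Qed.

Lemma freqs_in_scale P c p : freqs_in P p -> freqs_in P (tp_scale c p).
Proof. intros Hp. now apply Forall_map. Qed.

Lemma freqs_in_shift (P Q : Z -> Prop) m p :
  freqs_in P p -> (forall k, P k -> Q (k + m)%Z) -> freqs_in Q (tp_shift m p).
Proof. intros Hp HPQ. apply Forall_map. exact (List.Forall_impl _ (fun x => HPQ (fst x)) Hp). Qed.

Lemma freqs_in_conj (P Q : Z -> Prop) p :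
  freqs_in P p -> (forall k, P k -> Q (- k)%Z) -> freqs_in Q (tp_conj p).
Proof. intros Hp HPQ. apply Forall_map. exact (List.Forall_impl _ (fun x => HPQ (fst x)) Hp). Qed.

Lemma freqs_in_mul (P Q S : Z -> Prop) p q :
  freqs_in P p -> freqs_in Q q -> (forall k l, P k -> Q l -> S (k + l)%Z) ->
  freqs_in S (tp_mul p q).
Proof.
  intros Hp Hq HPQ. apply Forall_flat_map, (List.Forall_impl _ (P := fun x => P (fst x))); [|easy].
  intros x Hx. apply Forall_map, (List.Forall_impl _ (P := fun y => Q (fst y))); [|easy].
  intros y Hy. now apply HPQ.
Qed.

Lemma freqs_in_const (P : Z -> Prop) c : P 0%Z -> freqs_in P (tp_const c).
Proof. intros H0. now repeat constructor. Qed.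

Lemma tp_coef_freqs_out p k : freqs_in (fun l => l <> k) p -> tp_coef p k = 0.
Proof.
  induction 1 as [|[l c] p Hl _ IH]; [easy|]. unfold tp_coef in *; simpl in *.
  rewrite IH. destruct (Z.eqb_spec l k); [easy | ring].
Qed.

Definition tp_dot (p q : tpoly) : C :=
  Csum p (fun x => Csum q (fun y =>
    if Z.eqb (fst x) (fst y) then (snd x * Cconj (snd y))%C else 0)).

Lemma tp_coef0_mul_conj p q : tp_coef (tp_mul p (tp_conj q)) 0 = tp_dot p q.
Proof.
  rewrite tp_coef_mul. apply Csum_ext; intros x _.
  unfold tp_conj. rewrite Csum_map. apply Csum_ext; intros y _; simpl.
  destruct (Z.eqb_spec (fst x + - fst y) 0), (Z.eqb_spec (fst x) (fst y)); lia || easy.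
Qed.

Lemma tp_dot_app_l p1 p2 q : tp_dot (p1 ++ p2) q = (tp_dot p1 q + tp_dot p2 q)%C.
Proof. apply Csum_app. Qed.

Lemma tp_dot_app_r p q1 q2 : tp_dot p (q1 ++ q2) = (tp_dot p q1 + tp_dot p q2)%C.
Proof.
  unfold tp_dot. rewrite <- Csum_plus. apply Csum_ext; intros x _. apply Csum_app.
Qed.

Lemma tp_dot_scale_l c p q : tp_dot (tp_scale c p) q = (c * tp_dot p q)%C.
Proof.
  unfold tp_dot, tp_scale. rewrite Csum_map, <- Csum_mult_l. apply Csum_ext; intros x _.
  rewrite <- Csum_mult_l. apply Csum_ext; intros y _; simpl. destruct (Z.eqb _ _); ring.
Qed.

Lemma tp_dot_scale_r c p q : tp_dot p (tp_scale c q) = (Cconj c * tp_dot p q)%C.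
Proof.
  unfold tp_dot, tp_scale. rewrite <- Csum_mult_l. apply Csum_ext; intros x _.
  rewrite Csum_map, <- Csum_mult_l. apply Csum_ext; intros y _; simpl.
  destruct (Z.eqb _ _); [rewrite Cmult_conj; ring | ring].
Qed.

Lemma tp_dot_conj p q : tp_dot q p = Cconj (tp_dot p q).
Proof.
  unfold tp_dot. rewrite Csum_conj, Csum_swap. apply Csum_ext; intros x _.
  rewrite Csum_conj. apply Csum_ext; intros y _.
  rewrite Z.eqb_sym. destruct (Z.eqb _ _).
  - now rewrite Cmult_conj, Cconj_conj, Cmult_comm.
  - now rewrite Cconj_RtoC.
Qed.

Lemma Re_tp_dot_ge0 p : 0 <= Re (tp_dot p p).
Proof.
  rewrite <- tp_coef0_mul_conj. apply Re_tp_coef0_ge0. intros t.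
  rewrite tp_eval_mul, tp_eval_conj. destruct (tp_eval p t) as [x y].
  unfold Cmult, Cconj, Re; simpl. nra.
Qed.

Lemma tp_bessel p (L : list Z) :
  NoDup L -> Rsum L (fun k => Cmod (tp_coef p k) ^ 2) <= Re (tp_dot p p).
Proof.
  intros HL.
  set (c := tp_coef p).
  (* [h] is the part of [p] on the frequencies [L]; expand [0 <= |p - h|^2]. *)
  set (h := map (fun k => (k, c k)) L).
  set (S := Csum L (fun k => (c k * Cconj (c k))%C)).
  assert (Hph : tp_dot p h = S).
  { unfold tp_dot, h. rewrite Csum_swap, Csum_map. apply Csum_ext; intros k _; simpl.
    generalize (Cconj (c k)) as z; intros z.
    unfold c, tp_coef. rewrite Cmult_comm, <- Csum_mult_l.
    apply Csum_ext; intros x _. destruct (Z.eqb _ _); ring. }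
  assert (Hhh : tp_dot h h = S).
  { unfold tp_dot, h. rewrite Csum_map. apply Csum_ext; intros k Hk.
    rewrite Csum_map; simpl.
    rewrite <- (Csum_delta_NoDup L k (fun l => c k * Cconj (c l))%C HL Hk).
    apply Csum_ext; intros l _. now rewrite Z.eqb_sym. }
  assert (HS : Re S = Rsum L (fun k => Cmod (c k) ^ 2)).
  { unfold S. rewrite Re_Csum. apply Rsum_ext. intros k. now rewrite <- Cmod2_conj. }
  pose proof (Re_tp_dot_ge0 (p ++ tp_scale (-1) h)) as Hnn.
  rewrite tp_dot_app_l, !tp_dot_app_r, tp_dot_scale_l, !tp_dot_scale_r, tp_dot_scale_l,
    (tp_dot_conj p h), Hph, Hhh in Hnn.
  fold c. rewrite <- HS. destruct S as [s1 s2]. destruct (tp_dot p p) as [g1 g2].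
  unfold Cplus, Cmult, Cconj, RtoC, Re in *; simpl in *. lra.
Qed.

Section StepIdentities.

Variables (a b e Bj : C) (Aj : R).
Hypotheses (He : (e * Cconj e)%C = 1) (Hab : (a * Cconj a)%C = (1 + b * Cconj b)%C)
  (HAB : Aj ^ 2 - Cmod Bj ^ 2 = 1).

Let beta := Cmod Bj ^ 2.
Let g := (b * Cconj b)%C.
Let z := (Bj * (e * (a * Cconj b)))%C.
Let a' := (Aj * a + Cconj Bj * (Cconj e * b))%C.
Let b' := (Bj * (e * a) + Aj * b)%C.

Let Aj2 : (RtoC Aj * RtoC Aj)%C = (1 + RtoC beta)%C.
Proof. rewrite <- RtoC_mult, <- RtoC_plus. f_equal. unfold beta. lra. Qed.

Let Bj2 : (Bj * Cconj Bj)%C = RtoC beta.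
Proof. symmetry. apply Cmod2_conj. Qed.

Lemma factor_step_det : (a' * Cconj a')%C = (1 + b' * Cconj b')%C.
Proof.
  transitivity (Aj * Aj * (a * Cconj a) + Bj * Cconj Bj * (e * Cconj e) * (b * Cconj b)
                + Aj * (Cconj z + z))%C.
  { unfold a', z. rewrite Cplus_conj, !Cmult_conj, !Cconj_conj, Cconj_RtoC. ring. }
  transitivity (1 + (Bj * Cconj Bj * (e * Cconj e) * (a * Cconj a) + Aj * (z + Cconj z)
                     + Aj * Aj * (b * Cconj b)))%C.
  2: { unfold b', z. rewrite Cplus_conj, !Cmult_conj, !Cconj_conj, Cconj_RtoC. ring. }
  rewrite He, Hab, Aj2, Bj2. ring.
Qed.

Lemma factor_step_abs2 :
  (b' * Cconj b')%C = (beta + RtoC (1 + 2 * beta) * g + Aj * (z + Cconj z))%C.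
Proof.
  transitivity (Bj * Cconj Bj * (e * Cconj e) * (a * Cconj a) + Aj * (z + Cconj z)
                + Aj * Aj * g)%C.
  { unfold b', z, g. rewrite Cplus_conj, !Cmult_conj, !Cconj_conj, Cconj_RtoC. ring. }
  rewrite He, Hab, Aj2, Bj2, RtoC_plus, RtoC_mult. fold g. ring.
Qed.

Lemma factor_step_abs4 :
  let X := (beta + RtoC (1 + 2 * beta) * g)%C in
  ((b' * Cconj b') * Cconj (b' * Cconj b'))%C =
  (RtoC (beta ^ 2) + RtoC (4 * beta + 6 * beta ^ 2) * g
   + RtoC (1 + 6 * beta + 6 * beta ^ 2) * (g * Cconj g)
   + RtoC (2 * Aj) * (X * (z + Cconj z))
   + RtoC (Aj ^ 2) * (z * z + Cconj z * Cconj z))%C.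
Proof.
  intros X.
  assert (Hg : Cconj g = g) by (unfold g; rewrite Cmult_conj, Cconj_conj; ring).
  (* [(z + conj z)^2] contains [2 |z|^2 = 2 beta |a|^2 |b|^2 = 2 beta (1 + g) g]. *)
  assert (Hz : (z * Cconj z)%C = (beta * (1 + g) * g)%C).
  { transitivity (Bj * Cconj Bj * (e * Cconj e) * (a * Cconj a) * g)%C.
    - unfold z, g. rewrite !Cmult_conj, Cconj_conj. ring.
    - rewrite He, Hab, Bj2. fold g. ring. }
  rewrite Cmult_conj, Cconj_conj, (Cmult_comm (Cconj b')), factor_step_abs2, Hg.
  rewrite !RtoC_plus, !RtoC_mult, !RtoC_pow. unfold X.
  rewrite !RtoC_plus, !RtoC_mult.
  transitivity ((beta + (1 + 2 * beta) * g) ^ 2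
                + 2 * Aj * ((beta + (1 + 2 * beta) * g) * (z + Cconj z))
                + Aj * Aj * (z * z + Cconj z * Cconj z) + 2 * (Aj * Aj) * (z * Cconj z))%C.
  { ring. }
  replace (RtoC Aj ^ 2)%C with (1 + RtoC beta)%C by (rewrite <- Aj2; ring).
  rewrite Hz, Aj2. ring.
Qed.

End StepIdentities.

Lemma exp_8_lower_bound x : 0 <= x -> 1 + 6 * x + 6 * x ^ 2 <= exp (8 * x).
Proof.
  intros Hx. replace (8 * x) with (4 * x + 4 * x) by ring. rewrite exp_plus.
  pose proof (exp_ineq1_le (4 * x)). nra.
Qed.

Section FirstRow.

Variables (m : nat -> nat) (A : nat -> R) (B : nat -> C) (M : nat).

Local Notation freq k := (Z.of_nat (m (M + k + 1)%nat)).
Local Notation beta k := (Cmod (B (M + k + 1)%nat) ^ 2).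

Fixpoint first_row (k : nat) : tpoly * tpoly :=
  match k with
  | O => (tp_const 1, nil)
  | S k' =>
    let j := (M + k' + 1)%nat in
    (tp_scale (A j) (fst (first_row k'))
       ++ tp_scale (Cconj (B j)) (tp_shift (- freq k') (snd (first_row k'))),
     tp_scale (B j) (tp_shift (freq k') (fst (first_row k')))
       ++ tp_scale (A j) (snd (first_row k')))
  end.

Local Notation ea k t := (tp_eval (fst (first_row k)) t).
Local Notation eb k t := (tp_eval (snd (first_row k)) t).

Lemma prod_from_first_row k t :
  prod_from m A B M k t = Mat2 (ea k t) (eb k t) (Cconj (eb k t)) (Cconj (ea k t)).
Proof.
  induction k as [|k IH]; cbn [prod_from first_row fst snd tp_eval].
  - rewrite tp_eval_const. unfold mat2_id. f_equal; apply injective_projections; simpl; ring.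
  - rewrite IH. unfold mat2_mul, factor; cbn [m11 m12 m21 m22].
    rewrite !tp_eval_app, !tp_eval_scale, !tp_eval_shift, efreq_opp.
    unfold efreq. rewrite <- INR_IZR_INZ.
    f_equal; rewrite ?Cplus_conj, ?Cmult_conj, ?cexpi_opp, ?Cconj_conj, ?Cconj_RtoC; ring.
Qed.

Hypothesis hAB : forall j, (1 <= j)%nat -> A j ^ 2 - Cmod (B j) ^ 2 = 1.

Lemma first_row_det k t : (ea k t * Cconj (ea k t))%C = (1 + eb k t * Cconj (eb k t))%C.
Proof.
  induction k as [|k IH]; cbn [first_row fst snd tp_eval].
  - rewrite tp_eval_const. apply injective_projections; simpl; ring.
  - rewrite !tp_eval_app, !tp_eval_scale, !tp_eval_shift, efreq_opp.
    apply factor_step_det; [apply efreq_mult_conj | exact IH | apply hAB; lia].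
Qed.

Definition top_freq (k : nat) : Z := match k with O => 0%Z | S k' => freq k' end.

Hypothesis hgap : forall k, (0 < freq k)%Z /\ (3 * top_freq k <= freq k)%Z.

Lemma top_freq_nonneg k : (0 <= top_freq k)%Z.
Proof. destruct k; simpl; lia. Qed.

Ltac freq_arith := intros; cbv beta in *; lia.

Lemma first_row_freqs k :
  freqs_in (fun l => - top_freq k <= l <= 0)%Z (fst (first_row k)) /\
  freqs_in (fun l => 1 <= l <= top_freq k)%Z (snd (first_row k)).
Proof.
  induction k as [|k [Ha Hb]]; cbn [first_row fst snd top_freq].
  - split; [apply freqs_in_const; simpl; lia | constructor].
  - pose proof (hgap k). pose proof (top_freq_nonneg k).
    split; apply freqs_in_app; apply freqs_in_scale.
    + apply (freqs_in_impl _ _ _ Ha). freq_arith.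
    + apply (freqs_in_shift _ _ _ _ Hb). freq_arith.
    + apply (freqs_in_shift _ _ _ _ Ha). freq_arith.
    + apply (freqs_in_impl _ _ _ Hb). freq_arith.
Qed.

Definition b_abs2 (k : nat) : tpoly := tp_mul (snd (first_row k)) (tp_conj (snd (first_row k))).

Definition cross_term (k : nat) : tpoly :=
  tp_scale (B (M + k + 1))
    (tp_shift (freq k) (tp_mul (fst (first_row k)) (tp_conj (snd (first_row k))))).

Lemma conj_b_freqs k : freqs_in (fun l => - top_freq k <= l <= -1)%Z (tp_conj (snd (first_row k))).
Proof. apply (freqs_in_conj _ _ _ (proj2 (first_row_freqs k))). freq_arith. Qed.

Lemma b_abs2_freqs k : freqs_in (fun l => - top_freq k < l < top_freq k)%Z (b_abs2 k).
Proof.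
  apply (freqs_in_mul _ _ _ _ _ (proj2 (first_row_freqs k)) (conj_b_freqs k)). freq_arith.
Qed.

Lemma cross_term_freqs k : freqs_in (fun l => freq k - 2 * top_freq k <= l)%Z (cross_term k).
Proof.
  apply freqs_in_scale, (freqs_in_shift (fun l => - 2 * top_freq k <= l)%Z); [|freq_arith].
  apply (freqs_in_mul _ _ _ _ _ (proj1 (first_row_freqs k)) (conj_b_freqs k)). freq_arith.
Qed.

Definition cross_sum (k : nat) : tpoly := cross_term k ++ tp_conj (cross_term k).

Definition b_abs2_main (k : nat) : tpoly :=
  tp_const (beta k) ++ tp_scale (RtoC (1 + 2 * beta k)) (b_abs2 k).

Definition abs4_remainder (k : nat) : tpoly :=
  tp_scale (RtoC (2 * A (M + k + 1))) (tp_mul (b_abs2_main k) (cross_sum k))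
  ++ tp_scale (RtoC (A (M + k + 1) ^ 2))
       (tp_mul (cross_term k) (cross_term k)
        ++ tp_mul (tp_conj (cross_term k)) (tp_conj (cross_term k))).

Lemma cross_sum_freqs k : freqs_in (fun l => freq k - 2 * top_freq k <= Z.abs l)%Z (cross_sum k).
Proof.
  pose proof (cross_term_freqs k) as Hz.
  apply freqs_in_app; [apply (freqs_in_impl _ _ _ Hz) | apply (freqs_in_conj _ _ _ Hz)];
    freq_arith.
Qed.

Lemma b_abs2_main_freqs k :
  freqs_in (fun l => l = 0 \/ - top_freq k < l < top_freq k)%Z (b_abs2_main k).
Proof.
  apply freqs_in_app; [apply freqs_in_const; now left|].
  apply freqs_in_scale, (freqs_in_impl _ _ _ (b_abs2_freqs k)). freq_arith.
Qed.

Lemma abs4_remainder_freqs k : freqs_in (fun l => l <> 0)%Z (abs4_remainder k).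
Proof.
  pose proof (hgap k). pose proof (top_freq_nonneg k). pose proof (cross_term_freqs k) as Hz.
  assert (Hzc : freqs_in (fun l => l <= - (freq k - 2 * top_freq k))%Z (tp_conj (cross_term k)))
    by (apply (freqs_in_conj _ _ _ Hz); freq_arith).
  apply freqs_in_app; apply freqs_in_scale.
  - apply (freqs_in_mul _ _ _ _ _ (b_abs2_main_freqs k) (cross_sum_freqs k)). freq_arith.
  - apply freqs_in_app;
      [apply (freqs_in_mul _ _ _ _ _ Hz Hz) | apply (freqs_in_mul _ _ _ _ _ Hzc Hzc)]; freq_arith.
Qed.

Definition moment2 (k : nat) : R := Re (tp_coef (b_abs2 k) 0).
Definition moment4 (k : nat) : R := Re (tp_dot (b_abs2 k) (b_abs2 k)).

Lemma moment2_ge0 k : 0 <= moment2 k.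
Proof. unfold moment2, b_abs2. rewrite tp_coef0_mul_conj. apply Re_tp_dot_ge0. Qed.

Ltac expand_tp_eval :=
  repeat rewrite ?tp_eval_mul, ?tp_eval_conj, ?tp_eval_app, ?tp_eval_scale, ?tp_eval_shift,
    ?tp_eval_const, ?efreq_opp.

Lemma moment2_S k : moment2 (S k) = beta k + (1 + 2 * beta k) * moment2 k.
Proof.
  unfold moment2.
  rewrite (Re_tp_coef0_ext _ (b_abs2_main k ++ tp_scale (A (M + k + 1)) (cross_sum k))).
  - assert (Hcross : tp_coef (cross_sum k) 0 = 0).
    { apply tp_coef_freqs_out, (freqs_in_impl _ _ _ (cross_sum_freqs k)).
      pose proof (hgap k). freq_arith. }
    unfold b_abs2_main. rewrite !tp_coef_app, !tp_coef_scale, tp_coef0_const, Hcross.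
    destruct (tp_coef (b_abs2 k) 0). unfold Re, Cplus, Cmult, RtoC; simpl. ring.
  - intros t. unfold b_abs2_main, cross_sum, b_abs2, cross_term. cbn [first_row fst snd].
    expand_tp_eval.
    rewrite factor_step_abs2; [ring | apply efreq_mult_conj | apply first_row_det | apply hAB; lia].
Qed.

Lemma moment4_S k :
  moment4 (S k) = beta k ^ 2 + (4 * beta k + 6 * beta k ^ 2) * moment2 k
                  + (1 + 6 * beta k + 6 * beta k ^ 2) * moment4 k.
Proof.
  unfold moment4. rewrite <- !tp_coef0_mul_conj.
  rewrite (Re_tp_coef0_ext _
    (tp_const (RtoC (beta k ^ 2))
     ++ tp_scale (RtoC (4 * beta k + 6 * beta k ^ 2)) (b_abs2 k)
     ++ tp_scale (RtoC (1 + 6 * beta k + 6 * beta k ^ 2)) (tp_mul (b_abs2 k) (tp_conj (b_abs2 k)))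
     ++ abs4_remainder k)).
  - rewrite !tp_coef_app, !tp_coef_scale, tp_coef0_const,
      (tp_coef_freqs_out _ _ (abs4_remainder_freqs k)), tp_coef0_mul_conj.
    unfold moment2. destruct (tp_coef (b_abs2 k) 0), (tp_dot (b_abs2 k) (b_abs2 k)).
    unfold Re, Cplus, Cmult, RtoC; simpl. ring.
  - intros t. unfold abs4_remainder, b_abs2_main, cross_sum, b_abs2, cross_term.
    cbn [first_row fst snd]. expand_tp_eval.
    rewrite factor_step_abs4; [ring | apply efreq_mult_conj | apply first_row_det | apply hAB; lia].
Qed.

Definition moment_sum (k : nat) : R := moment4 k + moment2 k + 1 / 6.

Lemma moment_sum_S k : moment_sum (S k) = (1 + 6 * beta k + 6 * beta k ^ 2) * moment_sum k.
Proof. unfold moment_sum. rewrite moment4_S, moment2_S. field. Qed.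

Lemma moment_sum_le k :
  moment_sum k <= exp (8 * Rsum (seq (S M) k) (fun j => Cmod (B j) ^ 2)) / 6.
Proof.
  induction k as [|k IH].
  - unfold moment_sum, moment4, moment2. simpl. rewrite Rmult_0_r, exp_0. lra.
  - set (f j := Cmod (B j) ^ 2) in *.
    assert (Hsum : Rsum (seq (S M) (S k)) f = Rsum (seq (S M) k) f + beta k).
    { rewrite seq_S, Rsum_app. simpl. unfold f.
      replace (S (M + k)) with (M + k + 1)%nat by lia. ring. }
    assert (Hbeta : 0 <= beta k) by apply pow2_ge_0.
    assert (Hpos : 0 <= moment_sum k).
    { pose proof (moment2_ge0 k). pose proof (Re_tp_dot_ge0 (b_abs2 k)).
      unfold moment_sum, moment4. lra. }
    rewrite moment_sum_S, Hsum, (Rmult_plus_distr_l 8), exp_plus.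
    replace (exp (8 * Rsum (seq (S M) k) f) * exp (8 * beta k) / 6)
      with (exp (8 * beta k) * (exp (8 * Rsum (seq (S M) k) f) / 6)) by field.
    apply Rmult_le_compat; [nra | exact Hpos | exact (exp_8_lower_bound _ Hbeta) | lra].
Qed.

End FirstRow.

Lemma lacunary_gap (m : nat -> nat) (q : R) (M : nat) :
  3 <= q ->
  (forall j, (1 <= j)%nat -> (0 < m j)%nat) ->
  (forall j, (1 <= j)%nat -> q * INR (m j) <= INR (m (S j))) ->
  forall k, (0 < Z.of_nat (m (M + k + 1)%nat))%Z /\
            (3 * top_freq m M k <= Z.of_nat (m (M + k + 1)%nat))%Z.
Proof.
  intros hq hpos hlac k. split; [specialize (hpos (M + k + 1)%nat); lia|].
  destruct k as [|k]; cbn [top_freq]; [lia|].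
  specialize (hlac (M + k + 1)%nat ltac:(lia)).
  replace (S (M + k + 1)) with (M + S k + 1)%nat in hlac by lia.
  assert (H3 : INR (3 * m (M + k + 1)%nat) <= INR (m (M + S k + 1)%nat)).
  { rewrite mult_INR, (INR_IZR_INZ 3).
    pose proof (Rmult_le_compat_r _ _ _ (pos_INR (m (M + k + 1)%nat)) hq). simpl. lra. }
  apply INR_le in H3. lia.
Qed.

Definition tp_of_coefs (F : list Z) (D : Z -> C) : tpoly := map (fun n => (n, D n)) F.

Lemma tp_eval_of_coefs F D t :
  tp_eval (tp_of_coefs F D) t = Csum F (fun n => (D n * cexpi (2 * PI * IZR n * t))%C).
Proof. induction F; simpl; [easy | now rewrite IHF]. Qed.

Lemma autocorr_tp_coef F D n :
  autocorr F D n = Cconj (tp_coef (tp_mul (tp_conj (tp_of_coefs F D)) (tp_of_coefs F D)) n).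
Proof.
  rewrite tp_coef_mul, Csum_conj. unfold tp_conj, tp_of_coefs. rewrite !Csum_map.
  apply Csum_ext; intros n1 _. rewrite Csum_conj, Csum_map. apply Csum_ext; intros n2 _; simpl.
  destruct (Z.eqb_spec (n2 - n1) n), (Z.eqb_spec (- n1 + n2) n); try lia.
  - now rewrite Cmult_conj, Cconj_conj, Cmult_comm.
  - now rewrite Cconj_RtoC.
Qed.

Theorem lemma3p2
  (m : nat -> nat) (q : R) (A : nat -> R) (B : nat -> C) (M N : nat)
  (hq : 3 <= q)
  (hm_pos : forall j, (1 <= j)%nat -> (0 < m j)%nat)
  (hm_incr : forall j, (1 <= j)%nat -> (m j < m (S j))%nat)
  (hm_lac : forall j, (1 <= j)%nat -> q * INR (m j) <= INR (m (S j)))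
  (hA : forall j, (1 <= j)%nat -> 0 < A j)
  (hAB : forall j, (1 <= j)%nat -> A j ^ 2 - Cmod (B j) ^ 2 = 1)
  (hMN : (M < N)%nat)
  (F : list Z) (D : Z -> C)
  (hF_nodup : NoDup F)
  (hF_supp : forall n, In n F <-> D n <> RtoC 0)
  (hb : forall t : R,
      b_MN m A B M N t = Csum F (fun n => Cmult (D n) (cexpi (2 * PI * IZR n * t)))) :
  forall L : list Z, NoDup L ->
    Rsum L (fun n => Cmod (autocorr F D n) ^ 2) <= exp (8 * sumB2 B M N).
Proof.
  intros L HL.
  set (p := tp_of_coefs F D).
  set (G := tp_mul (tp_conj p) p).
  assert (Hp : forall t, tp_eval p t = tp_eval (snd (first_row m A B M (N - M))) t).
  { intros t. unfold p. rewrite tp_eval_of_coefs, <- hb. unfold b_MN.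
    now rewrite prod_from_first_row. }
  assert (HG : Re (tp_dot G G) = moment4 m A B M (N - M)).
  { unfold moment4, b_abs2, G. rewrite <- !tp_coef0_mul_conj. apply Re_tp_coef0_ext. intros t.
    rewrite !tp_eval_mul, !tp_eval_conj, !tp_eval_mul, !tp_eval_conj, Hp.
    rewrite !Cmult_conj, !Cconj_conj. ring. }
  pose proof (lacunary_gap m q M hq hm_pos hm_lac) as hgap.
  pose proof (moment_sum_le m A B M hAB hgap (N - M)) as Hle.
  pose proof (moment2_ge0 m A B M (N - M)).
  pose proof (exp_pos (8 * sumB2 B M N)).
  rewrite (Rsum_ext L _ (fun n => Cmod (tp_coef G n) ^ 2))
    by (intros n; now rewrite autocorr_tp_coef, Cmod_conj).
  eapply Rle_trans; [apply tp_bessel, HL|].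
  rewrite HG. unfold moment_sum, sumB2 in *. lra.
Qed.
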